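(* Let $\ell,\ell'\ge1$ and let $A$ ($\ell\times\ell$) and $A'$ ($\ell'\times\ell'$) be symmetric matrices with zero diagonal and all off-diagonal entries in $\{\frac12,1\}$, both dense. Let $J$ be the $\ell'\times\ell$ all-ones matrix and let $$C=\begin{pmatrix}A & J^{T}\\ J & A'\end{pmatrix}.$$ Then $C$ is dense.
   Context: For a symmetric $s\times s$ matrix $M$, consider the quadratic form $\mathbf{u}M\mathbf{u}^T$ on the simplex $\{\mathbf{u}=(u_1,\dots,u_s): u_i\ge 0,\ \sum_i u_i=1\}$. $M$ is called dense if this form does not attain its maximum on the boundary of the simplex, i.e. every maximizer $\mathbf{u}$ has all coordinates $u_i>0$. *)

From mathcomp Require Import all_boot all_order all_algebra.
From mathcomp Require Import reals.
Set Implicit Arguments. Unset Strict Implicit. Unset Printing Implicit Defensive.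
Import Order.TTheory GRing.Theory Num.Theory.
Local Open Scope ring_scope.

Definition in_simplex (R : realType) (s : nat) (u : 'rV[R]_s) : Prop :=
  (forall i, 0 <= u 0 i) /\ \sum_(i < s) u 0 i = 1.

Definition qform (R : realType) (s : nat) (M : 'M[R]_s) (u : 'rV[R]_s) : R :=
  (u *m M *m u^T) 0 0.

Definition simplex_maximizer (R : realType) (s : nat) (M : 'M[R]_s)
    (u : 'rV[R]_s) : Prop :=
  in_simplex u /\ forall v, in_simplex v -> qform M v <= qform M u.

Definition dense (R : realType) (s : nat) (M : 'M[R]_s) : Prop :=
  forall u, simplex_maximizer M u -> forall i, 0 < u 0 i.

Definition half_one_matrix (R : realType) (s : nat) (M : 'M[R]_s) : Prop :=
  M^T = M /\ (forall i, M i i = 0) /\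
  (forall i j, i != j -> M i j = 2^-1 \/ M i j = 1).

From mathcomp Require Import all_boot all_order all_algebra.
From mathcomp Require Import reals.
From mathcomp Require Import ring lra.
Set Implicit Arguments.
Unset Strict Implicit.
Import Order.TTheory GRing.Theory Num.Theory.
Local Open Scope ring_scope.

(* Write a point of the simplex as u = (x, y) with x of size l, y of size l',
   and let a, b be the masses (coordinate sums) of x and y, so a + b = 1.
   Then u C u^T = x A x^T + 2ab + y A' y^T, so maximizers of C are exactly
   maximizers of this "pair form" over pairs (x, y) of total mass 1; the pair
   form is symmetric in the two blocks, so it suffices to treat x.
   1. The block x carries positive mass: otherwise y lies in the simplex, and
      since A' has zero diagonal and entries at most 1 we get y A' y^T < 1;
      moving a little mass t onto a vertex of the first block then strictly
      increases the form, contradicting maximality.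
   2. If a > 0 then x / a maximizes the quadratic form of A on the simplex
      (rescaling a competitor v to a v keeps the pair feasible and multiplies
      the A-part by a^2), so density of A makes every coordinate of x positive. *)

Section DenseBlock.
Variable R : realType.

Definition mass (n : nat) (x : 'rV[R]_n) : R := \sum_(i < n) x 0 i.

Definition nonneg (n : nat) (x : 'rV[R]_n) : Prop := forall i, 0 <= x 0 i.

Lemma mass0 (n : nat) : mass (0 : 'rV[R]_n) = 0.
Proof. by rewrite /mass big1 // => i _; rewrite mxE. Qed.

Lemma massZ (n : nat) (c : R) (x : 'rV[R]_n) : mass (c *: x) = c * mass x.
Proof. by rewrite /mass mulr_sumr; apply: eq_bigr => i _; rewrite mxE. Qed.

Lemma mass_row (n m : nat) (x : 'rV[R]_n) (y : 'rV[R]_m) :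
  mass (row_mx x y) = mass x + mass y.
Proof.
by rewrite /mass big_split_ord; congr (_ + _); apply: eq_bigr => i _;
  rewrite ?row_mxEl ?row_mxEr.
Qed.

Lemma mass_delta (n : nat) (j : 'I_n) : mass (delta_mx 0 j : 'rV[R]_n) = 1.
Proof.
rewrite /mass (bigD1 j) //= big1 ?addr0 => [|i hi]; first by rewrite mxE !eqxx.
by rewrite mxE (negbTE hi) andbF.
Qed.

Lemma nonneg_mass0 (n : nat) (x : 'rV[R]_n) :
  nonneg x -> mass x = 0 -> x = 0.
Proof.
move=> hx hx0; apply/matrixP => i j; rewrite (ord1 i) mxE.
exact: (psumr_eq0P (fun k _ => hx k) hx0).
Qed.

Lemma nonnegZ (n : nat) (c : R) (x : 'rV[R]_n) :
  0 <= c -> nonneg x -> nonneg (c *: x).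
Proof. by move=> hc hx i; rewrite mxE mulr_ge0. Qed.

Lemma nonneg_row (n m : nat) (x : 'rV[R]_n) (y : 'rV[R]_m) :
  nonneg x -> nonneg y -> nonneg (row_mx x y).
Proof. by move=> hx hy k; rewrite mxE; case: split => j. Qed.

Lemma qformE (n : nat) (M : 'M[R]_n) (u : 'rV[R]_n) :
  qform M u = \sum_i \sum_j u 0 i * M i j * u 0 j.
Proof.
rewrite /qform mxE.
under eq_bigr => i _ do rewrite [u^T _ _]mxE [(u *m M) _ _]mxE mulr_suml.
by rewrite exchange_big.
Qed.

Lemma qformZ (n : nat) (M : 'M[R]_n) (c : R) (u : 'rV[R]_n) :
  qform M (c *: u) = c ^+ 2 * qform M u.
Proof.
rewrite /qform -!scalemxAl linearZ /= -scalemxAr !mxE.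
by rewrite expr2 mulrA.
Qed.

Lemma qform0 (n : nat) (M : 'M[R]_n) : qform M 0 = 0.
Proof. by rewrite /qform !mul0mx mxE. Qed.

Lemma qform_delta (n : nat) (M : 'M[R]_n) (j : 'I_n) :
  qform M (delta_mx 0 j) = M j j.
Proof. by rewrite /qform trmx_delta -rowE -colE !mxE. Qed.

Definition hollow_bounded (n : nat) (M : 'M[R]_n) : Prop :=
  (forall i, M i i = 0) /\ (forall i j, M i j <= 1).

Lemma half_one_hollow (n : nat) (M : 'M[R]_n) :
  half_one_matrix M -> hollow_bounded M.
Proof.
move=> [_ [hd ho]]; split=> // i j.
have [->|hij] := eqVneq i j; first by rewrite hd ler01.
by case: (ho i j hij) => ->; lra.
Qed.

(* For such M and x in the simplex, x M x^T <= 1 - sum_i x_i^2 < 1: only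
   off-diagonal products x_i x_j (which sum to 1 - sum_i x_i^2) contribute. *)
Lemma qform_lt1 (n : nat) (M : 'M[R]_n) (x : 'rV[R]_n) :
  hollow_bounded M -> in_simplex x -> qform M x < 1.
Proof.
move=> [hd hle] [hx hs].
have row_bound i : \sum_j x 0 i * M i j * x 0 j <= x 0 i - x 0 i ^+ 2.
  have -> : x 0 i - x 0 i ^+ 2 = \sum_(j | j != i) x 0 i * x 0 j.
    have hrow : x 0 i = x 0 i * x 0 i + \sum_(j | j != i) x 0 i * x 0 j.
      by rewrite -[LHS]mulr1 -hs mulr_sumr (bigD1 i).
    by rewrite {1}hrow; ring.
  rewrite (bigD1 i) //= hd mulr0 mul0r add0r; apply: ler_sum => j _.
  by rewrite mulrAC ler_piMr ?mulr_ge0.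
have [k /andP [_ hk]] : exists k, true && (0 < x 0 k).
  apply: psumr_neq0P => [k _|]; first exact: hx.
  by rewrite hs; apply/eqP; rewrite oner_neq0.
rewrite qformE (le_lt_trans (ler_sum _ (fun i _ => row_bound i))) //.
rewrite sumrB hs ltrBlDr ltrDl (bigD1 k) //=.
apply: ltr_pwDl; first by rewrite exprn_gt0.
by apply: sumr_ge0 => i _; rewrite sqr_ge0.
Qed.

(* The quadratic form of [M J^T; J N] at the split point u = (x, y). *)
Definition pair_form (m n : nat) (M : 'M[R]_m) (N : 'M[R]_n)
    (x : 'rV[R]_m) (y : 'rV[R]_n) : R :=
  qform M x + 2 * mass x * mass y + qform N y.

Lemma qform_block (m n : nat) (M : 'M[R]_m) (N : 'M[R]_n) x y :
  qform (block_mx M (const_mx 1 : 'M[R]_(n, m))^T (const_mx 1 : 'M[R]_(n, m)) N)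
    (row_mx x y) = pair_form M N x y.
Proof.
have constE p q (a : 'rV[R]_p) (b : 'rV[R]_q) :
    (a *m (const_mx 1 : 'M_(p, q)) *m b^T) 0 0 = mass a * mass b.
  rewrite mxE /mass mulr_sumr; apply: eq_bigr => j _.
  by rewrite !mxE; congr (_ * _); apply: eq_bigr => i _; rewrite mxE mulr1.
rewrite /pair_form /qform tr_row_mx mul_row_block mul_row_col !mulmxDl.
have addE (P Q : 'M[R]_1) : (P + Q) 0 0 = P 0 0 + Q 0 0 by rewrite mxE.
by rewrite trmx_const !addE !constE; ring.
Qed.

Definition pair_maximizer (m n : nat) (M : 'M[R]_m) (N : 'M[R]_n)
    (x : 'rV[R]_m) (y : 'rV[R]_n) : Prop :=
  [/\ nonneg x, nonneg y, mass x + mass y = 1 &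
      forall x' y', nonneg x' -> nonneg y' -> mass x' + mass y' = 1 ->
        pair_form M N x' y' <= pair_form M N x y].

Lemma block_pair_maximizer (m n : nat) (M : 'M[R]_m) (N : 'M[R]_n) u :
  simplex_maximizer
    (block_mx M (const_mx 1 : 'M[R]_(n, m))^T (const_mx 1 : 'M[R]_(n, m)) N) u ->
  pair_maximizer M N (lsubmx u) (rsubmx u).
Proof.
move=> [[hu hs] hmax]; rewrite -[u]hsubmxK in hu hs hmax.
split=> [k|k||x' y' hx' hy' hs'].
- by have := hu (lshift n k); rewrite row_mxEl.
- by have := hu (rshift m k); rewrite row_mxEr.
- by rewrite -mass_row.
rewrite -!qform_block; apply: hmax; split; first exact: nonneg_row.
by rewrite -/(mass _) mass_row.
Qed.

Lemma pair_maximizer_sym (m n : nat) (M : 'M[R]_m) (N : 'M[R]_n) x y :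
  pair_maximizer M N x y -> pair_maximizer N M y x.
Proof.
have swap p q (P : 'M[R]_p) (Q : 'M[R]_q) a b :
    pair_form P Q a b = pair_form Q P b a by rewrite /pair_form; ring.
move=> [hx hy hs hmax]; split=> // [|y' x' hy' hx' hs']; first by rewrite addrC.
by rewrite !(swap _ _ N); apply: hmax; rewrite // addrC.
Qed.

Lemma pair_maximizer_mass_pos (m n : nat) (M : 'M[R]_m) (N : 'M[R]_n) x y :
  (0 < m)%N -> hollow_bounded M -> hollow_bounded N ->
  pair_maximizer M N x y -> 0 < mass x.
Proof.
move=> hm [hMd _] hN [hx hy hs hmax].
rewrite lt_def /mass sumr_ge0 ?andbT; last by move=> i _; exact: hx.
apply/negP => /eqP hx0; rewrite -/(mass x) in hx0.
rewrite hx0 add0r in hs; rewrite (nonneg_mass0 hx hx0) in hmax.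
have := qform_lt1 hN (conj hy hs); set q := qform N y => hq.
pose t := (1 - q) / (2 - q).
have ht : t * (2 - q) = 1 - q by rewrite /t divfK // gt_eqF // subr_gt0; lra.
have ht0 : 0 < t by rewrite /t divr_gt0 // subr_gt0; lra.
have ht1 : 0 <= 1 - t by nra.
pose e := delta_mx 0 (Ordinal hm) : 'rV[R]_m.
have he : nonneg e by move=> i; rewrite mxE; case: (_ && _).
have hfeas : mass (t *: e) + mass ((1 - t) *: y) = 1.
  by rewrite !massZ mass_delta hs; ring.
have := hmax _ _ (nonnegZ (ltW ht0) he) (nonnegZ ht1 hy) hfeas.
rewrite /pair_form !massZ mass_delta hs !qformZ qform_delta hMd qform0 mass0 -/q.
by nra.
Qed.

Lemma pair_maximizer_pos (m n : nat) (M : 'M[R]_m) (N : 'M[R]_n) x y :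
  dense M -> pair_maximizer M N x y -> 0 < mass x -> forall i, 0 < x 0 i.
Proof.
move=> dM [hx hy hs hmax] ha i.
pose w := (mass x)^-1 *: x.
have qx : qform M x = mass x ^+ 2 * qform M w.
  by rewrite -qformZ /w scalerA divff ?gt_eqF // scale1r.
have hw : simplex_maximizer M w.
  split=> [|v [hv hvs]].
    split; first by apply: nonnegZ hx; rewrite invr_ge0 ltW.
    by rewrite -/(mass w) massZ mulVf ?gt_eqF.
  change (mass v = 1) in hvs.
  have hfeas : mass (mass x *: v) + mass y = 1 by rewrite massZ hvs mulr1.
  have := hmax _ _ (nonnegZ (ltW ha) hv) hy hfeas.
  rewrite /pair_form massZ hvs mulr1 qformZ qx lerD2r lerD2r.
  by rewrite ler_pM2l ?exprn_gt0.
by have := dM w hw i; rewrite mxE pmulr_rgt0 ?invr_gt0.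
Qed.

End DenseBlock.

Theorem mainTheorem5 (R : realType) (l l' : nat)
  (A : 'M[R]_l) (A' : 'M[R]_l') :
  (1 <= l)%N -> (1 <= l')%N ->
  half_one_matrix A -> half_one_matrix A' ->
  dense A -> dense A' ->
  dense (block_mx A (const_mx 1 : 'M[R]_(l', l))^T (const_mx 1 : 'M[R]_(l', l)) A').
Proof.
move=> hl hl' /half_one_hollow hA /half_one_hollow hA' dA dA' u hu.
have hxy := block_pair_maximizer hu.
have hyx := pair_maximizer_sym hxy.
have hx := pair_maximizer_pos dA hxy (pair_maximizer_mass_pos hl hA hA' hxy).
have hy := pair_maximizer_pos dA' hyx (pair_maximizer_mass_pos hl' hA' hA hyx).
by move=> i; rewrite -[u]hsubmxK mxE; case: split => j.
Qed.
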